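(* Let $x_1,x_2,y_1,y_2\in\mathbb{R}^2$ be four points not all on one line, and let $\mu=\mu_1\delta_{x_1}+\mu_2\delta_{x_2}$, $\nu=\nu_1\delta_{y_1}+\nu_2\delta_{y_2}$ be probability measures with positive weights and $[\mu]=[\nu]=0$. Let $M=\sum_i\mu_i\,x_i\otimes x_i$, $N=\sum_j\nu_j\,y_j\otimes y_j$, and write $N-M=\lambda_a\,a\otimes a+\lambda_b\,b\otimes b$ with $\lambda_a<0<\lambda_b$ and $a,b$ orthonormal. For $i,j\in\{1,2\}$ set $i'=3-i$, $j'=3-j$ and $$\gamma_{ij}=\mu_i\,\frac{\langle b,y_{j'}-x_i\rangle}{\langle b,y_{j'}-y_j\rangle}.$$ Then the inequalities $$\langle x_2-y_2,y_1-x_1\rangle\ge0\quad\text{and}\quad\langle x_1-y_2,y_1-x_2\rangle\ge0$$ hold if and only if $\gamma_{ij}\ge0$ for all $i,j\in\{1,2\}$.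
   Context: $[\mu]=\int x\,\mu(dx)$. Under the hypotheses, $N-M$ has one negative and one positive eigenvalue, so the decomposition above exists; $\gamma_{ij}$ does not depend on the sign choice of $b$. *)

From HB Require Import structures.
From mathcomp Require Import all_boot all_order all_algebra.
Set Implicit Arguments. Unset Strict Implicit. Unset Printing Implicit Defensive.
Import Order.TTheory GRing.Theory Num.Theory.
Local Open Scope ring_scope.

Section Defs.
Variable R : realFieldType.

Definition dot (u v : 'rV[R]_2) : R := \sum_(k < 2) u 0 k * v 0 k.

Definition tens (u v : 'rV[R]_2) : 'M[R]_2 := u^T *m v.

Definition on_one_line (p1 p2 p3 p4 : 'rV[R]_2) : Prop :=
  exists (p d : 'rV[R]_2), d != 0 /\
    forall z, z \in [:: p1; p2; p3; p4] -> exists t : R, z = p + t *: d.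

(* second moment of the discrete measure sum_i w_i delta_{z_i} *)
Definition second_moment (w : 'I_2 -> R) (z : 'I_2 -> 'rV[R]_2) : 'M[R]_2 :=
  \sum_(i < 2) w i *: tens (z i) (z i).

Definition barycenter (w : 'I_2 -> R) (z : 'I_2 -> 'rV[R]_2) : 'rV[R]_2 :=
  \sum_(i < 2) w i *: z i.

(* i' = 3 - i in 1-based indexing, i.e. rev_ord on 'I_2 *)
Definition gamma (mu : 'I_2 -> R) (x y : 'I_2 -> 'rV[R]_2) (b : 'rV[R]_2)
  (i j : 'I_2) : R :=
  mu i * (dot b (y (rev_ord j) - x i) / dot b (y (rev_ord j) - y j)).
End Defs.

(* index 1 and index 2 of the paper *)
Definition i1 : 'I_2 := ord0.
Definition i2 : 'I_2 := ord_max.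

From HB Require Import structures.
From mathcomp Require Import all_boot all_order all_algebra.
From mathcomp Require Import ring lra.
Set Implicit Arguments. Unset Strict Implicit. Unset Printing Implicit Defensive.
Import Order.TTheory GRing.Theory Num.Theory.
Local Open Scope ring_scope.

(** Centering gives x = (mu2 p, -mu1 p) and y = (nu2 q, -nu1 q), hence
    M = mu1 mu2 p⊗p and N = nu1 nu2 q⊗q.  In the eigenbasis (a, b) the
    off-diagonal entry of N - M vanishes, nu1 nu2 q_a q_b = mu1 mu2 p_a p_b, and
    the b-entry is positive, so q_b <> 0 and t := p_b / q_b satisfies
    mu1 mu2 t^2 < nu1 nu2.  The off-diagonal relation makes the a-part of each
    inner product a nonnegative multiple of its b-part, so the two inner
    products have the signs of (nu1 - mu1 t)(nu2 - mu2 t) and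
    (nu1 + mu2 t)(nu2 + mu1 t), while each gamma_ij is mu_i times one of these
    four factors.  The bound on t forbids both factors of either product from
    being negative. *)

Lemma forall_ord2 (P : 'I_2 -> Prop) : (forall i, P i) <-> P i1 /\ P i2.
Proof.
split=> [HP | [P1 P2] [[|[|//]] lti]]; first by split.
- by rewrite (_ : Ordinal lti = i1) //; apply: val_inj.
- by rewrite (_ : Ordinal lti = i2) //; apply: val_inj.
Qed.

Lemma sum_ord2 (V : nmodType) (F : 'I_2 -> V) : \sum_(i < 2) F i = F i1 + F i2.
Proof. by rewrite big_ord_recl big_ord1; congr (_ + F _); apply: val_inj. Qed.

Lemma rev_ord_i1 : rev_ord i1 = i2. Proof. exact: val_inj. Qed.
Lemma rev_ord_i2 : rev_ord i2 = i1. Proof. exact: val_inj. Qed.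

Section RealInequalities.
Variable R : realFieldType.

Lemma mulr_ge0_factors (a b r s : R) : 0 < a -> 0 < b -> r * s < a * b ->
  0 <= (a - r) * (b - s) -> 0 <= a - r /\ 0 <= b - s.
Proof.
move=> a_gt0 b_gt0 rs_lt ge0.
have not_both : a <= r -> b <= s -> False.
  by move=> ar bs; have := ler_pM (ltW a_gt0) (ltW b_gt0) ar bs; lra.
split; rewrite leNgt; apply/negP => neg.
- by move: ge0; rewrite nmulr_rge0 // subr_le0; apply: not_both; lra.
- by move: ge0; rewrite nmulr_lge0 // subr_le0 => ar; apply: not_both ar _; lra.
Qed.

Lemma factor_signs (m1 m2 n1 n2 t : R) : 0 < n1 -> 0 < n2 ->
  m1 * m2 * t ^+ 2 < n1 * n2 ->
  (0 <= (n1 - m1 * t) * (n2 - m2 * t) /\ 0 <= (n1 + m2 * t) * (n2 + m1 * t)) <->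
  [/\ 0 <= n1 + m2 * t, 0 <= n2 - m2 * t, 0 <= n1 - m1 * t & 0 <= n2 + m1 * t].
Proof.
move=> n1_gt0 n2_gt0 t_small.
split=> [[ge0_P ge0_Q] | [? ? ? ?]]; last by split; apply: mulr_ge0.
have small_P : m1 * t * (m2 * t) < n1 * n2 by rewrite mulrACA -expr2.
have small_Q : - (m2 * t) * - (m1 * t) < n1 * n2.
  by rewrite mulrNN mulrACA -expr2 [m2 * m1]mulrC.
have [? ?] := mulr_ge0_factors n1_gt0 n2_gt0 small_P ge0_P.
have := mulr_ge0_factors n1_gt0 n2_gt0 small_Q.
by rewrite !opprK => /(_ ge0_Q) [? ?].
Qed.

Lemma ratio_sqr_lt (c d u v : R) : 0 <= d -> 0 < c * v ^+ 2 - d * u ^+ 2 ->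
  v != 0 /\ d * (u / v) ^+ 2 < c.
Proof.
move=> d_ge0 diff_gt0.
have v_neq0 : v != 0.
  apply: contraTneq diff_gt0 => ->; rewrite expr0n /= mulr0 sub0r.
  by rewrite -leNgt oppr_le0 mulr_ge0 ?sqr_ge0.
have v2_gt0 : 0 < v ^+ 2 by rewrite exprn_even_gt0.
split=> //; rewrite -(ltr_pM2r v2_gt0) expr_div_n -mulrA divfK ?gt_eqF //.
by rewrite -subr_gt0.
Qed.

End RealInequalities.

Section Plane.
Variable R : realFieldType.
Implicit Types (u v z w p q : 'rV[R]_2).

Lemma dotC u v : dot u v = dot v u.
Proof. by apply: eq_bigr => k _; rewrite mulrC. Qed.

Lemma dotBr u v w : dot u (v - w) = dot u v - dot u w.
Proof. by rewrite /dot -sumrB; apply: eq_bigr => k _; rewrite !mxE mulrBr. Qed.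

Lemma dotZr u v (c : R) : dot u (c *: v) = c * dot u v.
Proof. by rewrite /dot mulr_sumr; apply: eq_bigr => k _; rewrite mxE mulrCA. Qed.

Lemma mul_tr_dot u v : u *m v^T = (dot u v)%:M.
Proof.
by rewrite [LHS]mx11_scalar mxE; congr _%:M; apply: eq_bigr => k _; rewrite mxE.
Qed.

Lemma scalar_mx11K (c : R) : (c%:M : 'M_1) 0 0 = c.
Proof. by rewrite mxE mulr1n. Qed.

Lemma tens_form u v z w : u *m tens z w *m v^T = (dot u z * dot w v)%:M.
Proof.
by rewrite /tens mulmxA [u *m _]mul_tr_dot -mulmxA mul_tr_dot -scalar_mxM.
Qed.

Lemma tens_combination_form (c d e f : R) p q a b u v :
  c *: tens q q - d *: tens p p = e *: tens a a + f *: tens b b ->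
  c * (dot u q * dot q v) - d * (dot u p * dot p v) =
  e * (dot u a * dot a v) + f * (dot u b * dot b v).
Proof.
move=> /(congr1 (fun A => (u *m A *m v^T) 0 0)).
rewrite mulmxBr mulmxBl mulmxDr mulmxDl -!scalemxAr -!scalemxAl !tens_form.
by rewrite !mxE !mulr1n.
Qed.

Lemma tensZ (c c' : R) u v : tens (c *: u) (c' *: v) = (c * c') *: tens u v.
Proof.
by rewrite /tens -scalemxAr [(_ *: _)^T]linearZ /= -scalemxAl scalerA mulrC.
Qed.

Lemma barycenter2_eq0 (w : 'I_2 -> R) (z : 'I_2 -> 'rV[R]_2) :
  w i2 != 0 -> barycenter w z = 0 ->
  exists p, z i1 = w i2 *: p /\ z i2 = - w i1 *: p.
Proof.
rewrite /barycenter sum_ord2 addrC => w2_neq0 /eqP; rewrite addr_eq0 => /eqP wz.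
exists ((w i2)^-1 *: z i1); split; first by rewrite scalerA divff // scale1r.
apply: (scalerI w2_neq0).
by rewrite /= wz !scalerA mulrAC divff // mul1r scaleNr.
Qed.

Lemma second_moment_centered (w : 'I_2 -> R) (z : 'I_2 -> 'rV[R]_2) p :
  w i1 + w i2 = 1 -> z i1 = w i2 *: p -> z i2 = - w i1 *: p ->
  second_moment w z = (w i1 * w i2) *: tens p p.
Proof.
move=> w_sum1 z1 z2.
rewrite /second_moment sum_ord2 z1 z2 !tensZ !scalerA -scalerDl.
by congr (_ *: _); rewrite -[RHS]mulr1 -w_sum1; ring.
Qed.

Lemma gamma_centered_ge0 (mu nu : 'I_2 -> R) (x y : 'I_2 -> 'rV[R]_2)
    p q b (t : R) :
  (forall i, 0 < mu i) -> nu i1 + nu i2 = 1 ->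
  x i1 = mu i2 *: p -> x i2 = - mu i1 *: p ->
  y i1 = nu i2 *: q -> y i2 = - nu i1 *: q ->
  dot b q != 0 -> dot b p = t * dot b q ->
  (forall i j, 0 <= gamma mu x y b i j) <->
  [/\ 0 <= nu i1 + mu i2 * t, 0 <= nu i2 - mu i2 * t,
       0 <= nu i1 - mu i1 * t & 0 <= nu i2 + mu i1 * t].
Proof.
move=> mu_gt0 nu_sum1 x1 x2 y1 y2 qb_neq0 pb_eq.
have y21 : dot b (y i2 - y i1) = - dot b q.
  by rewrite y1 y2 dotBr !dotZr -mulrBl -opprD nu_sum1 mulN1r.
have y12 : dot b (y i1 - y i2) = dot b q.
  by rewrite y1 y2 dotBr !dotZr -mulrBl opprK addrC nu_sum1 mul1r.
rewrite !forall_ord2.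
have [-> -> -> ->] : [/\ gamma mu x y b i1 i1 = mu i1 * (nu i1 + mu i2 * t),
    gamma mu x y b i1 i2 = mu i1 * (nu i2 - mu i2 * t),
    gamma mu x y b i2 i1 = mu i2 * (nu i1 - mu i1 * t) &
    gamma mu x y b i2 i2 = mu i2 * (nu i2 + mu i1 * t)].
  by split; rewrite /gamma ?rev_ord_i1 ?rev_ord_i2 ?y21 ?y12 ?x1 ?x2 ?y1 ?y2;
    rewrite !dotBr !dotZr pb_eq; field.
rewrite !pmulr_rge0 //.
by split=> [[[? ?] [? ?]] | [? ? ? ?]].
Qed.

Section OrthonormalFrame.
Variables a b : 'rV[R]_2.
Hypotheses (aa : dot a a = 1) (bb : dot b b = 1) (ab : dot a b = 0).

Lemma dot_orthonormal u v : dot u v = dot a u * dot a v + dot b u * dot b v.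
Proof.
rewrite -[dot u v]scalar_mx11K -mul_tr_dot.
have frame : col_mx a b *m (col_mx a b)^T = 1%:M.
  rewrite tr_col_mx mul_col_mx !mul_mx_row !mul_tr_dot aa bb ab dotC ab.
  rewrite (scalar_mx_block 1 1) raddf0 block_mxEv; reflexivity.
have -> : u *m v^T = (u *m (col_mx a b)^T) *m (col_mx a b *m v^T).
  by rewrite mulmxA -(mulmxA u) (mulmx1C frame) mulmx1.
rewrite tr_col_mx mul_mx_row mul_col_mx mul_row_col !mul_tr_dot -!scalar_mxM.
by rewrite -raddfD scalar_mx11K [dot u a]dotC [dot u b]dotC.
Qed.

Lemma coupled_dot_ge0E (n1 n2 r1 r2 t : R) p q :
  0 < n1 -> 0 < n2 -> 0 <= r1 * r2 -> dot b q != 0 -> dot b p = t * dot b q ->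
  n1 * n2 * (dot a q * dot b q) = r1 * r2 * (dot a p * dot b p) ->
  (0 <= dot (n1 *: q - r1 *: p) (n2 *: q - r2 *: p)) =
  (0 <= (n1 - r1 * t) * (n2 - r2 * t)).
Proof.
move=> n1_gt0 n2_gt0 r_ge0 qb_neq0 pb_eq coupling.
rewrite dot_orthonormal !dotBr !dotZr pb_eq; rewrite pb_eq in coupling.
move: (dot a q) (dot b q) (dot a p) qb_neq0 coupling => qa qb pa qb_neq0 coupling.
have c_gt0 : 0 < n1 * n2 by rewrite mulr_gt0.
have c_neq0 : n1 * n2 != 0 by rewrite gt_eqF.
have qa_eq : qa = r1 * r2 * pa * t / (n1 * n2).
  apply: (mulfI c_neq0); rewrite mulrCA divff // mulr1.
  by apply: (mulIf qb_neq0); rewrite -mulrA coupling; ring.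
have scaled : n1 * n2 * ((n1 * qa - r1 * pa) * (n2 * qa - r2 * pa)
    + (n1 * qb - r1 * (t * qb)) * (n2 * qb - r2 * (t * qb)))
  = (r1 * r2 * pa ^+ 2 + n1 * n2 * qb ^+ 2) * ((n1 - r1 * t) * (n2 - r2 * t)).
  by rewrite qa_eq; field; rewrite !gt_eqF.
have K_gt0 : 0 < r1 * r2 * pa ^+ 2 + n1 * n2 * qb ^+ 2.
  apply: ltr_wpDl; first exact: mulr_ge0 r_ge0 (sqr_ge0 pa).
  by apply: mulr_gt0; rewrite // exprn_even_gt0.
by rewrite -(pmulr_rge0 _ c_gt0) scaled pmulr_rge0.
Qed.

Lemma tens_eigen_coords (c d la lb : R) p q :
  c *: tens q q - d *: tens p p = la *: tens a a + lb *: tens b b ->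
  c * (dot a q * dot b q) = d * (dot a p * dot b p) /\
  c * dot b q ^+ 2 - d * dot b p ^+ 2 = lb.
Proof.
move=> eigen; have ba : dot b a = 0 by rewrite dotC.
have := tens_combination_form a b eigen; have := tens_combination_form b b eigen.
rewrite aa bb ab ba [dot q b]dotC [dot p b]dotC.
rewrite !(mulr0, mul0r, mulr1, add0r) !expr2.
by move=> -> /eqP; rewrite subr_eq0 => /eqP.
Qed.

End OrthonormalFrame.

End Plane.

Theorem lemma4p4 (R : realFieldType)
  (x y : 'I_2 -> 'rV[R]_2) (mu nu : 'I_2 -> R)
  (a b : 'rV[R]_2) (la lb : R) :
  ~ on_one_line (x i1) (x i2) (y i1) (y i2) ->
  (forall i, 0 < mu i) -> (forall j, 0 < nu j) ->
  mu i1 + mu i2 = 1 -> nu i1 + nu i2 = 1 ->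
  barycenter mu x = 0 -> barycenter nu y = 0 ->
  second_moment nu y - second_moment mu x = la *: tens a a + lb *: tens b b ->
  la < 0 -> 0 < lb ->
  dot a a = 1 -> dot b b = 1 -> dot a b = 0 ->
  (0 <= dot (x i2 - y i2) (y i1 - x i1) /\ 0 <= dot (x i1 - y i2) (y i1 - x i2))
  <-> (forall i j, 0 <= gamma mu x y b i j).
Proof.
move=> _ mu_gt0 nu_gt0 mu_sum1 nu_sum1 x_centered y_centered eigen _ lb_gt0.
move=> aa bb ab.
have [p [x1 x2]] := barycenter2_eq0 (lt0r_neq0 (mu_gt0 i2)) x_centered.
have [q [y1 y2]] := barycenter2_eq0 (lt0r_neq0 (nu_gt0 i2)) y_centered.
rewrite (second_moment_centered mu_sum1 x1 x2)
  (second_moment_centered nu_sum1 y1 y2) in eigen.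
have [coupling lb_eq] := tens_eigen_coords aa bb ab eigen.
have d_ge0 : 0 <= mu i1 * mu i2 by rewrite ltW ?mulr_gt0.
rewrite -lb_eq in lb_gt0; have [qb_neq0 t_small] := ratio_sqr_lt d_ge0 lb_gt0.
set t := dot b p / dot b q in t_small.
have pb_eq : dot b p = t * dot b q by rewrite divfK.
rewrite (gamma_centered_ge0 mu_gt0 nu_sum1 x1 x2 y1 y2 qb_neq0 pb_eq).
apply: iff_trans (factor_signs (nu_gt0 i1) (nu_gt0 i2) t_small).
have -> : x i2 - y i2 = nu i1 *: q - mu i1 *: p.
  by rewrite x2 y2 !scaleNr opprK addrC.
have -> : x i1 - y i2 = nu i1 *: q - (- mu i2) *: p.
  by rewrite x1 y2 !scaleNr !opprK addrC.
rewrite y1 x1 x2.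
have d_ge0' : 0 <= - mu i2 * - mu i1 by rewrite mulrNN mulrC.
have coupling' :
    nu i1 * nu i2 * (dot a q * dot b q) = - mu i2 * - mu i1 * (dot a p * dot b p).
  by rewrite mulrNN [mu i2 * _]mulrC.
have coupled := coupled_dot_ge0E aa bb ab (nu_gt0 i1) (nu_gt0 i2).
rewrite (coupled _ _ _ _ _ d_ge0 qb_neq0 pb_eq coupling).
rewrite (coupled _ _ _ _ _ d_ge0' qb_neq0 pb_eq coupling').
by rewrite !mulNr !opprK.
Qed.
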